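(* Let $\Sigma$ be a real symmetric positive semidefinite $n\times n$ matrix which is irreducible. If $\Sigma\preceq_e 0$, then ${\operatorname{mr}}(\Sigma)=n-1$, where \[{\operatorname{mr}}(\Sigma)=\min\{\operatorname{rank}(\hat\Sigma)\mid \Sigma=\tilde\Sigma+\hat\Sigma,\ \hat\Sigma\text{ real symmetric positive semidefinite},\ \tilde\Sigma\text{ real diagonal}\}.\]
   Context: A square matrix is irreducible if it cannot be brought into block-diagonal form (with at least two diagonal blocks) by a simultaneous permutation of its rows and columns. For a real square matrix $M$, $M\preceq_e 0$ means that the off-diagonal entries of $M$ are all $\le 0$, or can be made so by changing the signs of selected rows and the corresponding columns (i.e. there is a diagonal matrix $P$ with diagonal entries $\pm1$ such that $PMP$ has all off-diagonal entries $\le 0$). In the definition of ${\operatorname{mr}}$ the diagonal matrix $\tilde\Sigma$ is not required to be positive semidefinite. *)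

From HB Require Import structures.
From mathcomp Require Import all_boot all_order all_algebra all_fingroup.
From mathcomp Require Import boolp reals.
Set Implicit Arguments. Unset Strict Implicit. Unset Printing Implicit Defensive.
Import Order.TTheory GRing.Theory Num.Theory.
Local Open Scope ring_scope.

Section Defs.
Variables (R : realType) (n : nat).

Definition symmetric_mx (A : 'M[R]_n) : Prop := A^T = A.

Definition psd_mx (A : 'M[R]_n) : Prop :=
  forall x : 'cV[R]_n, 0 <= (x^T *m A *m x) 0 0.

(* A is reducible iff some simultaneous permutation of rows and columns
   brings it into block-diagonal form with two diagonal blocks of sizes
   k and n-k, 0 < k < n: the permuted matrix B i j := A (s i) (s j) has
   zero entries whenever exactly one of i, j lies in the first block. *)
Definition reducible_mx (A : 'M[R]_n) : Prop :=
  exists (s : 'S_n) (k : nat), (0 < k < n)%N /\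
    forall i j : 'I_n, ((i < k)%N != (j < k)%N) -> A (s i) (s j) = 0.

Definition irreducible_mx (A : 'M[R]_n) : Prop := ~ reducible_mx A.

Definition sign_diag_mx (d : 'I_n -> bool) : 'M[R]_n :=
  diag_mx (\row_i (if d i then -1 else 1)).

Definition preceq_e0 (A : 'M[R]_n) : Prop :=
  exists d : 'I_n -> bool, forall i j : 'I_n, i != j ->
    (sign_diag_mx d *m A *m sign_diag_mx d) i j <= 0.

Definition mr_rank (S : 'M[R]_n) (r : nat) : Prop :=
  exists St Sh : 'M[R]_n,
    is_diag_mx St /\ symmetric_mx Sh /\ psd_mx Sh /\ S = St + Sh /\ \rank Sh = r.

Lemma mr_rank_ex (S : 'M[R]_n) : psd_mx S -> symmetric_mx S ->
  exists r, `[< mr_rank S r >].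
Proof.
move=> Hp Hs; exists (\rank S); apply/asboolP.
exists 0, S; split; first by apply/is_diag_mxP => i j _; rewrite mxE.
by rewrite add0r.
Qed.

End Defs.

(* minimum rank; defined only for symmetric PSD Sigma (the set is then
   nonempty: Sigma = 0 + Sigma). *)
Definition mr (R : realType) (n : nat) (S : 'M[R]_n)
  (Hp : psd_mx S) (Hs : symmetric_mx S) : nat :=
  ex_minn (mr_rank_ex Hp Hs).

(* Conjugating Sigma by the signature matrix P of Sigma ⪯_e 0 turns it into a
   matrix T with nonpositive off-diagonal entries; this changes neither
   irreducibility nor the admissible ranks of a decomposition.
   Upper bound: the Laplacian-type matrix with the off-diagonal entries of T
   and zero row sums is positive semidefinite (its quadratic form is
   (1/2) sum_ij (-T_ij) (f_i - f_j)^2) and kills the all-ones vector, so its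
   rank is at most n - 1.
   Lower bound: if T = D + H with D diagonal and H positive semidefinite,
   then H has the same nonpositive off-diagonal entries.  For u in the kernel
   of H, the vector |u| has an even smaller (hence zero) quadratic form, so it
   lies in the kernel as well; the kernel equation at a zero of u then forces
   H_xy = 0 between the zeros x and the non-zeros y of u.  By irreducibility a
   kernel vector vanishing at one coordinate vanishes identically, so the
   kernel of H is at most one-dimensional. *)
From mathcomp Require Import all_boot all_order all_algebra all_fingroup.
From mathcomp Require Import boolp reals.
From mathcomp Require Import ring lra zify.
Import Order.TTheory GRing.Theory Num.Theory.
Local Open Scope ring_scope.
Set Implicit Arguments. Unset Strict Implicit.

Section RankBounds.
Variables (F : fieldType) (m : nat).

Lemma mxrank_le_pred (A : 'M[F]_m.+1) (v : 'rV[F]_m.+1) :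
  v != 0 -> v *m A = 0 -> (\rank A <= m)%N.
Proof.
move=> v_neq0 vA0.
have : (v <= kermx A)%MS by rewrite sub_kermx vA0.
move/mxrankS; rewrite mxrank_ker rank_rV v_neq0.
have := rank_leq_row A; lia.
Qed.

(* kermx A meets the hyperplane kermx E = {u | u_0 = 0} trivially. *)
Lemma mxrank_ge_pred (A : 'M[F]_m.+1) :
  (forall u : 'rV[F]_m.+1, u *m A = 0 -> u 0 ord0 = 0 -> u = 0) ->
  (m <= \rank A)%N.
Proof.
move=> ker_inj.
pose E : 'M[F]_(m.+1, 1) := col ord0 1%:M.
have cap0 : \rank (kermx A :&: kermx E)%MS = 0%N.
  apply/eqP; rewrite mxrank_eq0; apply/eqP/row_matrixP => i; rewrite row0.
  set v := row i _.
  have vA : (v <= kermx A)%MS := submx_trans (row_sub i _) (capmxSl _ _).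
  have vE : (v <= kermx E)%MS := submx_trans (row_sub i _) (capmxSr _ _).
  rewrite sub_kermx in vA; rewrite sub_kermx in vE.
  apply: ker_inj; first exact/eqP.
  move/eqP/matrixP/(_ 0 0): vE; rewrite !mxE => <-.
  rewrite (bigD1 ord0) //= !mxE eqxx mulr1 big1 ?addr0 // => k k0.
  by rewrite !mxE (negbTE k0) mulr0.
have := mxrank_sum_cap (kermx A) (kermx E); rewrite cap0 addn0 !mxrank_ker.
have := rank_leq_col (kermx A + kermx E)%MS.
have := rank_leq_col E; have := rank_leq_row A; lia.
Qed.

End RankBounds.

Section QuadraticForm.
Variables (R : realFieldType) (n : nat).
Implicit Types (A : 'M[R]_n) (f g : 'I_n -> R).

Definition bform A f g := \sum_i \sum_j f i * A i j * g j.
Definition qform A f := bform A f f.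

Lemma qform_mx A (x : 'cV[R]_n) : (x^T *m A *m x) 0 0 = qform A (fun i => x i 0).
Proof.
rewrite mxE /qform /bform exchange_big /=; apply: eq_bigr => j _.
by rewrite mxE mulr_suml; apply: eq_bigr => i _; rewrite !mxE.
Qed.

Lemma qform_shift A f g t :
  qform A (fun k => f k + t * g k) =
  qform A f + t * (bform A f g + bform A g f) + t ^+ 2 * qform A g.
Proof.
rewrite /qform /bform -big_split /= !mulr_sumr -!big_split /=.
apply: eq_bigr => i _; rewrite -big_split /= !mulr_sumr -!big_split /=.
by apply: eq_bigr => j _; ring.
Qed.

Lemma quadratic_ge0_lin0 (b c : R) : (forall t, 0 <= t * b + t ^+ 2 * c) -> b = 0.
Proof.
move=> ge0; have c_ge0 : 0 <= c by have := ge0 1; have := ge0 (-1); lra.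
pose t := - b / (c + 1).
have bE : b = - (t * (c + 1)) by rewrite /t divfK ?opprK // gt_eqF //; lra.
have := ge0 t; rewrite bE => ge0t.
have t0 : t = 0 by apply/eqP; rewrite -sqrf_eq0 eq_le sqr_ge0 andbT; nra.
by rewrite t0 mul0r oppr0.
Qed.

Lemma qform_eq0_ker A z : (forall i j, A i j = A j i) ->
  (forall f, 0 <= qform A f) -> qform A z = 0 ->
  forall j, \sum_i z i * A i j = 0.
Proof.
move=> A_sym A_psd z0 j; pose e k : R := (k == j)%:R.
have bze : bform A z e = \sum_i z i * A i j.
  apply: eq_bigr => i _; rewrite (bigD1 j) //= /e eqxx mulr1 big1 ?addr0 //.
  by move=> k /negbTE ->; rewrite mulr0.
have bez : bform A e z = bform A z e.
  rewrite /bform exchange_big; apply: eq_bigr => i _; apply: eq_bigr => k _.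
  by rewrite A_sym; ring.
suff : bform A z e + bform A z e = 0 by rewrite bze; lra.
apply: (@quadratic_ge0_lin0 _ (qform A e)) => t.
by have := A_psd (fun k => z k + t * e k); rewrite qform_shift z0 bez add0r.
Qed.

End QuadraticForm.

Section ZMatrix.
Variables (R : realFieldType) (n : nat) (M : 'M[R]_n).
Hypothesis M_sym : forall i j, M i j = M j i.
Hypothesis M_psd : forall f, 0 <= qform M f.
Hypothesis M_offdiag : forall i j, i != j -> M i j <= 0.

Lemma qform_norm_le f : qform M (fun i => `|f i|) <= qform M f.
Proof.
apply: ler_sum => i _; apply: ler_sum => j _; rewrite mulrAC [leRHS]mulrAC -normrM.
have [<-|ij] := eqVneq i j; first by rewrite ger0_norm // -expr2 sqr_ge0.
by have := ler_norm (f i * f j); have := M_offdiag ij; nra.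
Qed.

Lemma ker_norm u : (forall j, \sum_i u i * M i j = 0) ->
  forall j, \sum_i `|u i| * M i j = 0.
Proof.
move=> u_ker; apply: qform_eq0_ker => //.
have qu0 : qform M u = 0.
  rewrite /qform /bform exchange_big big1 //= => j _.
  by rewrite -mulr_suml u_ker mul0r.
by apply/le_anti; rewrite M_psd andbT -qu0 qform_norm_le.
Qed.

Lemma ker_zero_split u : (forall j, \sum_i u i * M i j = 0) ->
  forall x y, u x = 0 -> u y != 0 -> M x y = 0.
Proof.
move=> u_ker x y ux0 uy_neq0.
have terms_ge0 i : true -> 0 <= - (`|u i| * M i x).
  move=> _; have [->|ix] := eqVneq i x; first by rewrite ux0 normr0 mul0r oppr0.
  by rewrite oppr_ge0 mulr_ge0_le0 ?M_offdiag.
have := psumr_eq0P terms_ge0; rewrite sumrN ker_norm // oppr0 => /(_ erefl y isT).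
by move/eqP; rewrite oppr_eq0 mulf_eq0 normr_eq0 (negbTE uy_neq0) M_sym => /eqP.
Qed.

End ZMatrix.

Section Laplacian.
Variables (R : realFieldType) (n : nat).

Definition laplacian (T : 'M[R]_n) : 'M[R]_n :=
  \matrix_(i, j) if i == j then - \sum_(k | k != i) T i k else T i j.

Variable T : 'M[R]_n.

Lemma laplacian_offdiag i j : i != j -> laplacian T i j = T i j.
Proof. by rewrite mxE => /negbTE ->. Qed.

Hypothesis T_sym : forall i j, T i j = T j i.

Lemma laplacian_sym i j : laplacian T i j = laplacian T j i.
Proof. by rewrite !mxE eq_sym; case: eqVneq => [->|]. Qed.

Lemma laplacian_col_sum j : \sum_i laplacian T i j = 0.
Proof.
rewrite (bigD1 j) //= mxE eqxx addrC; apply/eqP; rewrite subr_eq0; apply/eqP.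
by apply: eq_bigr => i ij; rewrite laplacian_offdiag // T_sym.
Qed.

Hypothesis T_offdiag : forall i j, i != j -> T i j <= 0.

Lemma qform_laplacian_ge0 f : 0 <= qform (laplacian T) f.
Proof.
pose F i j := if i == j then 0 else T i j * (f i * f j - f i ^+ 2).
have qE : qform (laplacian T) f = \sum_i \sum_j F i j.
  apply: eq_bigr => i _; rewrite (bigD1 i) //= [RHS](bigD1 i) //= /F eqxx add0r.
  rewrite mxE eqxx mulrN mulNr mulr_sumr mulr_suml -sumrN -big_split /=.
  apply: eq_bigr => j ji; rewrite eq_sym (negbTE ji) laplacian_offdiag 1?eq_sym //.
  by ring.
have symE : 2 * \sum_i \sum_j F i j = \sum_i \sum_j (F i j + F j i).
  rewrite mulr_natl mulr2n {2}exchange_big -big_split /=.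
  by apply: eq_bigr => i _; rewrite -big_split.
suff : 0 <= \sum_i \sum_j (F i j + F j i) by rewrite qE -symE; lra.
apply: sumr_ge0 => i _; apply: sumr_ge0 => j _; rewrite /F eq_sym.
have [_|ij] := eqVneq i j; first by rewrite addr0.
have -> : T i j * (f i * f j - f i ^+ 2) + T j i * (f j * f i - f j ^+ 2) =
          - T i j * (f i - f j) ^+ 2 by rewrite T_sym; ring.
by rewrite mulr_ge0 ?sqr_ge0 // oppr_ge0 T_offdiag.
Qed.

End Laplacian.

Section MinimumRank.
Variable R : realType.

Lemma psd_mxP n (A : 'M[R]_n) : psd_mx A <-> forall f, 0 <= qform A f.
Proof.
split=> [A_psd f | qA_ge0 x]; last by rewrite qform_mx.
have := A_psd (\col_i f i); rewrite qform_mx.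
by congr (_ <= _); apply: eq_bigr => i _; apply: eq_bigr => j _; rewrite !mxE.
Qed.

Lemma symmetric_mxP n (A : 'M[R]_n) : symmetric_mx A <-> forall i j, A i j = A j i.
Proof.
split=> [A_sym i j | A_sym]; first by rewrite -{1}A_sym mxE.
by apply/matrixP => i j; rewrite mxE.
Qed.

Lemma reducible_mx_split n (A : 'M[R]_n) (Z : {set 'I_n}) :
  Z != set0 -> Z != setT ->
  (forall x y, (x \in Z) != (y \in Z) -> A x y = 0) -> reducible_mx A.
Proof.
move=> /set0Pn [x0 x0Z] Z_neqT Z_split.
pose r := enum Z ++ enum (~: Z).
have r_size : size r = n by rewrite size_cat -!cardE cardsC card_ord.
have r_uniq : uniq r.
  rewrite cat_uniq !enum_uniq /= andbT; apply/hasPn => y.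
  by rewrite !mem_enum inE.
have nth_inj : injective (fun i : 'I_n => nth x0 r i).
  move=> i j /eqP; rewrite nth_uniq ?r_size ?ltn_ord // => /eqP; exact: val_inj.
pose s := perm nth_inj.
have s_mem (i : 'I_n) : (s i \in Z) = (i < #|Z|)%N.
  rewrite permE nth_cat -cardE; case: ifP => iZ.
    by rewrite -mem_enum mem_nth // -cardE.
  have lt_i : (i - #|Z| < size (enum (~: Z)))%N.
    have := cardsC Z; have := ltn_ord i; rewrite -cardE card_ord; move: iZ; lia.
  by have := mem_nth x0 lt_i; rewrite mem_enum inE => /negbTE.
have Z_lt : (#|Z| < n)%N.
  by have := proper_card (A := Z) (B := setT); rewrite properT cardsT card_ord => ->.
exists s, #|Z|; split.
  by rewrite Z_lt andbT lt0n cards_eq0; apply/set0Pn; exists x0.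
by move=> i j; rewrite -!s_mem => /Z_split.
Qed.

Lemma mr_rank_ge m (T : 'M[R]_m.+1) r : irreducible_mx T ->
  (forall i j, i != j -> T i j <= 0) -> mr_rank T r -> (m <= r)%N.
Proof.
move=> T_irr T_offdiag.
move=> [St [Sh [St_diag [/symmetric_mxP Sh_sym [/psd_mxP Sh_psd [TE <-]]]]]].
have TSh i j : i != j -> T i j = Sh i j.
  by move=> ij; rewrite TE mxE (is_diag_mxP St_diag i j ij) add0r.
have Sh_offdiag i j : i != j -> Sh i j <= 0 by move=> ij; rewrite -TSh ?T_offdiag.
apply: mxrank_ge_pred => u uSh0 u0.
have u_ker j : \sum_i u 0 i * Sh i j = 0 by move/rowP: uSh0 => /(_ j); rewrite !mxE.
pose Z := [set i | u 0 i == 0].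
have [Z_T|Z_neqT] := eqVneq Z setT.
  apply/rowP => i; rewrite mxE; apply/eqP.
  by have := Z_T; move/setP/(_ i); rewrite !inE => ->.
case: T_irr; apply: (@reducible_mx_split _ _ Z) => //.
  by apply/set0Pn; exists ord0; rewrite inE u0.
have u_split := ker_zero_split Sh_sym Sh_psd Sh_offdiag u_ker.
move=> x y; rewrite !inE.
have [ux|ux] := eqVneq (u 0 x) 0; have [uy|uy] := eqVneq (u 0 y) 0 => //= _.
  by rewrite TSh ?u_split //; apply: contra_neq uy => <-.
by rewrite TSh 1?Sh_sym ?u_split //; apply: contra_neq ux => ->.
Qed.

Lemma mr_rank_laplacian n (T : 'M[R]_n) : symmetric_mx T ->
  (forall i j, i != j -> T i j <= 0) -> mr_rank T (\rank (laplacian T)).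
Proof.
move=> /symmetric_mxP T_sym T_offdiag.
exists (T - laplacian T), (laplacian T); split; [|split; [|split; [|split]]] => //.
- apply/is_diag_mxP => i j ij.
  by rewrite mxE [X in _ + X]mxE laplacian_offdiag // subrr.
- by apply/symmetric_mxP; exact: laplacian_sym.
- by apply/psd_mxP; exact: qform_laplacian_ge0.
- by rewrite subrK.
Qed.

Lemma mxrank_laplacian_le m (T : 'M[R]_m.+1) : symmetric_mx T ->
  (\rank (laplacian T) <= m)%N.
Proof.
move=> /symmetric_mxP T_sym; apply: (@mxrank_le_pred _ _ _ (const_mx 1)).
  by apply/eqP => /rowP/(_ ord0); rewrite !mxE; apply/eqP; exact: oner_neq0.
apply/rowP => j; rewrite !mxE -[RHS](laplacian_col_sum T_sym j).
by apply: eq_bigr => i _; rewrite mxE mul1r.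
Qed.

End MinimumRank.

Section DiagCongruence.
Variables (R : realType) (n : nat) (d : 'rV[R]_n).

Lemma diag_congrE (A : 'M[R]_n) i j :
  (diag_mx d *m A *m diag_mx d) i j = d 0 i * A i j * d 0 j.
Proof. by rewrite mul_mx_diag mul_diag_mx !mxE. Qed.

Lemma symmetric_diag_congr (A : 'M[R]_n) :
  symmetric_mx A -> symmetric_mx (diag_mx d *m A *m diag_mx d).
Proof. by move=> A_sym; rewrite /symmetric_mx !trmx_mul tr_diag_mx A_sym mulmxA. Qed.

Hypothesis d_neq0 : forall i, d 0 i != 0.

Lemma irreducible_diag_congr (A : 'M[R]_n) :
  irreducible_mx A -> irreducible_mx (diag_mx d *m A *m diag_mx d).
Proof.
move=> A_irr [s [k [k_bounds A_split]]]; apply: A_irr; exists s, k; split=> // i j.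
move=> /A_split /eqP; rewrite diag_congrE !mulf_eq0 !(negbTE (d_neq0 _)) orbF.
by move/eqP.
Qed.

Lemma mr_rank_diag_congr (A : 'M[R]_n) r :
  mr_rank A r -> mr_rank (diag_mx d *m A *m diag_mx d) r.
Proof.
move=> [St [Sh [St_diag [Sh_sym [Sh_psd [-> <-]]]]]].
have D_unit : diag_mx d \in unitmx.
  by rewrite unitmxE det_diag unitfE; apply/prodf_neq0 => i _.
exists (diag_mx d *m St *m diag_mx d), (diag_mx d *m Sh *m diag_mx d).
split; [|split; [|split; [|split]]].
- apply/is_diag_mxP => i j ij.
  by rewrite diag_congrE (is_diag_mxP St_diag i j ij) mulr0 mul0r.
- exact: symmetric_diag_congr.
- move=> x; have := Sh_psd (diag_mx d *m x).
  by rewrite trmx_mul tr_diag_mx !mulmxA.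
- by rewrite mulmxDr mulmxDl.
- by rewrite mxrankMfree ?row_free_unit // eqmxMfull // row_full_unit.
Qed.

End DiagCongruence.

Lemma sign_diag_mxK (R : realType) n (d : 'I_n -> bool) :
  sign_diag_mx R d *m sign_diag_mx R d = 1%:M.
Proof.
apply/matrixP => i j; rewrite mul_diag_mx !mxE.
by case: (d i); case: (i == j); rewrite ?mulr1n ?mulr0n ?mulr0 ?mulrNN ?mulr1.
Qed.

Theorem corollary2 (R : realType) (n : nat) (S : 'M[R]_n)
  (Hs : symmetric_mx S) (Hp : psd_mx S) :
  irreducible_mx S -> preceq_e0 S -> mr Hp Hs = (n - 1)%N.
Proof.
case: n S Hs Hp => [|m] S S_sym S_psd S_irr [d S_signed];
  rewrite /mr; case: ex_minnP => r /asboolP S_r r_min.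
  by case: S_r => St [Sh [_ [_ [_ [_ <-]]]]]; apply/eqP; rewrite -leqn0 rank_leq_row.
pose P := sign_diag_mx R d.
have P_neq0 i : (\row_i (if d i then -1 else 1) : 'rV[R]_m.+1) 0 i != 0.
  by rewrite mxE; case: (d i); rewrite ?oppr_eq0 oner_eq0.
pose T := P *m S *m P.
have S_T : S = P *m T *m P.
  by rewrite /T !mulmxA sign_diag_mxK mul1mx -mulmxA sign_diag_mxK mulmx1.
have T_sym : symmetric_mx T := symmetric_diag_congr _ S_sym.
have T_irr : irreducible_mx T := irreducible_diag_congr P_neq0 S_irr.
rewrite subn1 /=; apply/anti_leq/andP; split.
  apply: leq_trans (mxrank_laplacian_le T_sym); apply: r_min; apply/asboolP.
  by rewrite S_T; apply: mr_rank_diag_congr => //; apply: mr_rank_laplacian.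
exact: mr_rank_ge T_irr S_signed (mr_rank_diag_congr P_neq0 S_r).
Qed.
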